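(* Let $\mathcal{A}$ be a u-MPS core tensor and $R$ a (possibly ambiguous) regex such that the generalized right transfer operator $\mathcal{E}^r_R$ converges. Let $Q_\ell,Q_r\in\mathbb{R}^{D\times D}$ be positive semidefinite with $\mathcal{Z}_R(Q_\ell,Q_r)>0$ (and assume all normalization constants encountered by the algorithm are positive). Then the random string output by $\mathrm{SAMPLE}(R,Q_\ell,Q_r)$ has distribution $$P_R(s,Q_\ell,Q_r)=|s|_R\,\frac{\tilde P(s,Q_\ell,Q_r)}{\mathcal{Z}_R(Q_\ell,Q_r)},\qquad s\in\Sigma^*,$$ where $\tilde P(s,Q_\ell,Q_r)=\mathrm{Tr}(Q_\ell\,\mathcal{E}^r_s(Q_r))=\mathrm{Tr}(Q_\ell\mathcal{A}(s)Q_r\mathcal{A}(s)^T)$ and $\mathcal{Z}_R(Q_\ell,Q_r)=\mathrm{Tr}(Q_\ell\,\mathcal{E}^r_R(Q_r))$.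
   Context: A u-MPS core tensor $\mathcal{A}$ of shape $(D,d,D)$ over a finite alphabet $\Sigma$ of size $d$ assigns to each $c\in\Sigma$ a matrix $\mathcal{A}(c)\in\mathbb{R}^{D\times D}$; for $s=s_1\cdots s_n$, $\mathcal{A}(s)=\mathcal{A}(s_1)\cdots\mathcal{A}(s_n)$, $\mathcal{A}(\varepsilon)=I$. Regex are syntax trees built from characters $c\in\Sigma$, concatenations $R_1R_2$, unions $R_1|R_2$, Kleene closures $S^*$. Match counts: $|s|_c=1$ if $s=c$, else $0$; $|s|_{R_1R_2}=\sum_{s_1s_2=s}|s_1|_{R_1}|s_2|_{R_2}$; $|s|_{R_1|R_2}=|s|_{R_1}+|s|_{R_2}$; $|s|_{S^*}=\sum_{n\ge0}\sum_{s_1\cdots s_n=s}\prod_i|s_i|_S$ (the $n=0$ term being $1$ iff $s=\varepsilon$). Generalized transfer operators: $\mathcal{E}^r_c(Q)=\mathcal{A}(c)Q\mathcal{A}(c)^T$, $\mathcal{E}^\ell_c(Q)=\mathcal{A}(c)^TQ\mathcal{A}(c)$; $\mathcal{E}^r_{R_1R_2}=\mathcal{E}^r_{R_1}\circ\mathcal{E}^r_{R_2}$, $\mathcal{E}^\ell_{R_1R_2}=\mathcal{E}^\ell_{R_2}\circ\mathcal{E}^\ell_{R_1}$; unions give sums; $\mathcal{E}^r_{S^*}=\sum_{n\ge0}(\mathcal{E}^r_S)^{\circ n}$, $\mathcal{E}^\ell_{S^*}=\sum_{n\ge0}(\mathcal{E}^\ell_S)^{\circ n}$. A literal string $s$ is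 treated as the concatenation of its characters, so $\mathcal{E}^r_s(Q)=\mathcal{A}(s)Q\mathcal{A}(s)^T$, $\mathcal{E}^\ell_s(Q)=\mathcal{A}(s)^TQ\mathcal{A}(s)$. $\mathcal{E}^r_R$ converges if all Kleene-closure series in its recursive definition converge. Define $\mathcal{Z}_R(Q_\ell,Q_r)=\mathrm{Tr}(Q_\ell\mathcal{E}^r_R(Q_r))$. The randomized procedure $\mathrm{SAMPLE}(R,Q_\ell,Q_r)$ is defined recursively: (i) if $R=c$, return $c$; (ii) if $R=R_1R_2$, let $s_1=\mathrm{SAMPLE}(R_1,Q_\ell,\mathcal{E}^r_{R_2}(Q_r))$, then $s_2=\mathrm{SAMPLE}(R_2,\mathcal{E}^\ell_{s_1}(Q_\ell),Q_r)$, and return $s_1s_2$; (iii) if $R=R_1|R_2$, choose $i\in\{1,2\}$ with probability $\mathcal{Z}_{R_i}(Q_\ell,Q_r)/\mathcal{Z}_{R_1|R_2}(Q_\ell,Q_r)$ and return $\mathrm{SAMPLE}(R_i,Q_\ell,Q_r)$; (iv) if $R=S^*$, with probability $p_{\mathrm{HALT}}=\mathrm{Tr}(Q_\ell Q_r)/\mathcal{Z}_{S^*}(Q_\ell,Q_r)$ return the empty string $\varepsilon$, and otherwise (probability $1-p_{\mathrm{HALT}}$) return $\mathrm{SAMPLE}(SS^*,Q_\ell,Q_r)$, where $SS^*$ is the concatenation of $S$ with $S^*$. All random choices are independent. *)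

From Stdlib Require Import Reals List Relations ClassicalEpsilon.
From Stdlib Require Fin.
Import ListNotations.
Open Scope R_scope.

(** * Real D x D matrices, represented as functions (only indices < D matter) *)
Definition Mat := nat -> nat -> R.

Fixpoint rsum (n : nat) (f : nat -> R) : R :=
  match n with O => 0 | S k => rsum k f + f k end.

Definition mmul (D : nat) (X Y : Mat) : Mat :=
  fun i j => rsum D (fun k => X i k * Y k j).
Definition madd (X Y : Mat) : Mat := fun i j => X i j + Y i j.
Definition mid : Mat := fun i j => if Nat.eq_dec i j then 1 else 0.
Definition mtr (X : Mat) : Mat := fun i j => X j i.
Definition mtrace (D : nat) (X : Mat) : R := rsum D (fun i => X i i).

Definition PSD (D : nat) (Q : Mat) : Prop :=
  (forall i j, (i < D)%nat -> (j < D)%nat -> Q i j = Q j i) /\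
  (forall x : nat -> R,
      0 <= rsum D (fun i => rsum D (fun j => x i * Q i j * x j))).

(** limit of a real sequence (meaningful when it converges) *)
Definition lim (u : nat -> R) : R := epsilon (inhabits 0) (fun l => Un_cv u l).
Definition mlim (u : nat -> Mat) : Mat := fun i j => lim (fun N => u N i j).

Definition word (d : nat) := list (Fin.t d).

Inductive regex (d : nat) : Type :=
| Chr  : Fin.t d -> regex d
| Cat  : regex d -> regex d -> regex d
| Alt  : regex d -> regex d -> regex d
| Star : regex d -> regex d.
Arguments Chr {d}. Arguments Cat {d}. Arguments Alt {d}. Arguments Star {d}.

Definition is_single {d} (c : Fin.t d) (s : word d) : R :=
  match s with [c'] => if Fin.eq_dec c c' then 1 else 0 | _ => 0 end.

Definition splits {T} (s : list T) : list (list T * list T) :=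
  map (fun k => (firstn k s, skipn k s)) (seq 0 (S (length s))).
Definition lsum {T} (f : T -> R) (l : list T) : R :=
  fold_right (fun x acc => f x + acc) 0 l.

(** sum over s1 ... sn = s of prod_i f(s_i)  (n = 0: [s = eps]) *)
Fixpoint star_pow {d} (f : word d -> R) (n : nat) (s : word d) : R :=
  match n with
  | O => match s with [] => 1 | _ => 0 end
  | S k => lsum (fun p => f (fst p) * star_pow f k (snd p)) (splits s)
  end.

Fixpoint count {d} (e : regex d) (s : word d) : R :=
  match e with
  | Chr c => is_single c s
  | Cat e1 e2 => lsum (fun p => count e1 (fst p) * count e2 (snd p)) (splits s)
  | Alt e1 e2 => count e1 s + count e2 s
  | Star e1 => lim (fun N => rsum (S N) (fun n => star_pow (count e1) n s))
  end.

Definition Aword (D : nat) {d} (A : Fin.t d -> Mat) (s : word d) : Mat :=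
  fold_right (fun c M => mmul D (A c) M) mid s.

Fixpoint iter_op (T : Mat -> Mat) (n : nat) (Q : Mat) : Mat :=
  match n with O => Q | S k => T (iter_op T k Q) end.
Fixpoint psum_op (T : Mat -> Mat) (N : nat) (Q : Mat) : Mat :=
  match N with O => Q | S k => madd (psum_op T k Q) (iter_op T (S k) Q) end.

Fixpoint Er (D : nat) {d} (A : Fin.t d -> Mat) (e : regex d) : Mat -> Mat :=
  match e with
  | Chr c => fun Q => mmul D (mmul D (A c) Q) (mtr (A c))
  | Cat e1 e2 => fun Q => Er D A e1 (Er D A e2 Q)
  | Alt e1 e2 => fun Q => madd (Er D A e1 Q) (Er D A e2 Q)
  | Star e1 => fun Q => mlim (fun N => psum_op (Er D A e1) N Q)
  end.

Definition El_word (D : nat) {d} (A : Fin.t d -> Mat) (s : word d) (Q : Mat) : Mat :=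
  mmul D (mmul D (mtr (Aword D A s)) Q) (Aword D A s).

(** E^r_R converges: every Kleene-closure series converges (entrywise, for every Q) *)
Fixpoint Conv (D : nat) {d} (A : Fin.t d -> Mat) (e : regex d) : Prop :=
  match e with
  | Chr _ => True
  | Cat e1 e2 => Conv D A e1 /\ Conv D A e2
  | Alt e1 e2 => Conv D A e1 /\ Conv D A e2
  | Star e1 => Conv D A e1 /\
      forall (Q : Mat) (i j : nat), (i < D)%nat -> (j < D)%nat ->
        exists l, Un_cv (fun N => psum_op (Er D A e1) N Q i j) l
  end.

Definition ZR (D : nat) {d} (A : Fin.t d -> Mat) (e : regex d) (Ql Qr : Mat) : R :=
  mtrace D (mmul D Ql (Er D A e Qr)).

Definition Ptilde (D : nat) {d} (A : Fin.t d -> Mat) (s : word d) (Ql Qr : Mat) : R :=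
  mtrace D (mmul D Ql (mmul D (mmul D (Aword D A s) Qr) (mtr (Aword D A s)))).

(** * Output distribution of SAMPLE.
    [psamp n e Ql Qr s] = probability that SAMPLE(e,Ql,Qr) halts with output s
    using recursion depth at most n.  The probability that SAMPLE outputs s is
    the (monotone) limit as n -> infinity. *)
Fixpoint psamp (D : nat) {d} (A : Fin.t d -> Mat) (n : nat) (e : regex d)
         (Ql Qr : Mat) (s : word d) {struct n} : R :=
  match n with
  | O => 0
  | S n' =>
    match e with
    | Chr c => is_single c s
    | Cat e1 e2 =>
        lsum (fun p => psamp D A n' e1 Ql (Er D A e2 Qr) (fst p)
                       * psamp D A n' e2 (El_word D A (fst p) Ql) Qr (snd p))
             (splits s)
    | Alt e1 e2 =>
        ZR D A e1 Ql Qr / ZR D A (Alt e1 e2) Ql Qr * psamp D A n' e1 Ql Qr s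
      + ZR D A e2 Ql Qr / ZR D A (Alt e1 e2) Ql Qr * psamp D A n' e2 Ql Qr s
    | Star e1 =>
        let pH := mtrace D (mmul D Ql Qr) / ZR D A (Star e1) Ql Qr in
        (match s with [] => pH | _ => 0 end)
        + (1 - pH) * psamp D A n' (Cat e1 (Star e1)) Ql Qr s
    end
  end.

(** * Recursive calls SAMPLE(e,Ql,Qr) can make (control flow) *)
Definition call (d : nat) := (regex d * Mat * Mat)%type.

Inductive step (D : nat) {d} (A : Fin.t d -> Mat) : call d -> call d -> Prop :=
| step_cat1 e1 e2 Ql Qr :
    step D A (Cat e1 e2, Ql, Qr) (e1, Ql, Er D A e2 Qr)
| step_cat2 e1 e2 Ql Qr (s1 : word d) :
    count e1 s1 <> 0 ->
    step D A (Cat e1 e2, Ql, Qr) (e2, El_word D A s1 Ql, Qr)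
| step_alt1 e1 e2 Ql Qr : step D A (Alt e1 e2, Ql, Qr) (e1, Ql, Qr)
| step_alt2 e1 e2 Ql Qr : step D A (Alt e1 e2, Ql, Qr) (e2, Ql, Qr)
| step_star e1 Ql Qr : step D A (Star e1, Ql, Qr) (Cat e1 (Star e1), Ql, Qr).

Definition norm_pos (D : nat) {d} (A : Fin.t d -> Mat) (c : call d) : Prop :=
  match c with
  | (Alt e1 e2, Ql, Qr) => 0 < ZR D A (Alt e1 e2) Ql Qr
  | (Star e1, Ql, Qr) => 0 < ZR D A (Star e1) Ql Qr
  | _ => True
  end.

(* Write [target e Ql Qr s] for the claimed limit [|s|_e P~(s, Ql, Qr) / Z_e(Ql, Qr)]. Each
   rule of SAMPLE matches a decomposition of the target. For a union, [Z] is additive. For a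
   concatenation, cyclicity of the trace gives [P~(s1 s2, Ql, Qr) = P~(s2, E^l_{s1} Ql, Qr)]
   and [P~(s1, Ql, E^r_{e2} Qr) = Z_{e2}(E^l_{s1} Ql, Qr)], so the target of [e1 e2] is the sum
   over splittings [s = s1 s2] of the product of the targets of the two recursive calls. For a
   closure, [E^r_{S*} = id + E^r_{S S*}], and convergence of this series forces [|ε|_S = 0],
   so every unfolding consumes a letter. All these quantities are traces of products of PSD
   matrices, hence nonnegative, and a call whose normalization constant vanishes is made with
   weight [0]. Consequently the probability that SAMPLE halts within depth [n] lies between
   [0] and the target, and it converges to the target by induction on the regex and, inside a
   closure, on the length of [s]. *)

From Stdlib Require Import Reals List Relations.
From Stdlib Require Import Lra Lia Wf_nat FunctionalExtensionality ClassicalEpsilon.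
Import ListNotations.
Open Scope R_scope.

Lemma rsum_ext n f g : (forall k, (k < n)%nat -> f k = g k) -> rsum n f = rsum n g.
Proof.
  induction n as [|n IH]; intros H; simpl; auto.
  rewrite IH by (intros; apply H; lia); rewrite H by lia; auto.
Qed.

Lemma rsum_plus n f g : rsum n (fun k => f k + g k) = rsum n f + rsum n g.
Proof. induction n; simpl; [lra | rewrite IHn; lra]. Qed.

Lemma rsum_minus n f g : rsum n (fun k => f k - g k) = rsum n f - rsum n g.
Proof. induction n; simpl; [lra | rewrite IHn; lra]. Qed.

Lemma rsum_scal_l n c f : rsum n (fun k => c * f k) = c * rsum n f.
Proof. induction n; simpl; [lra | rewrite IHn; lra]. Qed.

Lemma rsum_scal_r n c f : rsum n (fun k => f k * c) = rsum n f * c.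
Proof. induction n; simpl; [lra | rewrite IHn; lra]. Qed.

Lemma rsum_eq0 n f : (forall k, (k < n)%nat -> f k = 0) -> rsum n f = 0.
Proof.
  induction n as [|n IH]; intros H; simpl; [lra|].
  rewrite IH by (intros; apply H; lia); rewrite H by lia; lra.
Qed.

Lemma rsum_swap n m f :
  rsum n (fun i => rsum m (fun j => f i j)) = rsum m (fun j => rsum n (fun i => f i j)).
Proof.
  induction n as [|n IH]; simpl.
  - symmetry; apply rsum_eq0; auto.
  - rewrite IH, <- rsum_plus; auto.
Qed.

Lemma rsum_ge0 n f : (forall k, (k < n)%nat -> 0 <= f k) -> 0 <= rsum n f.
Proof.
  induction n as [|n IH]; intros H; simpl; [lra|].
  pose proof (H n ltac:(lia)); pose proof (IH ltac:(intros; apply H; lia)); lra.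
Qed.

Lemma rsum_delta_l n a f :
  (a < n)%nat -> rsum n (fun k => (if Nat.eq_dec a k then 1 else 0) * f k) = f a.
Proof.
  induction n as [|n IH]; intros Ha; [lia|]; simpl.
  destruct (Nat.eq_dec a n) as [->|Hne].
  - rewrite rsum_eq0; [lra|].
    intros k Hk; destruct (Nat.eq_dec n k); [lia | lra].
  - rewrite IH by lia; lra.
Qed.

Lemma rsum_delta_r n a f :
  (a < n)%nat -> rsum n (fun k => f k * (if Nat.eq_dec k a then 1 else 0)) = f a.
Proof.
  intros Ha; rewrite <- (rsum_delta_l n a f Ha); apply rsum_ext; intros k _.
  destruct (Nat.eq_dec a k), (Nat.eq_dec k a); try lia; lra.
Qed.

Lemma rsum_shift n f : rsum (S n) f = f 0%nat + rsum n (fun k => f (S k)).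
Proof.
  induction n as [|n IH]; [simpl; lra|].
  change (rsum (S (S n)) f) with (rsum (S n) f + f (S n)); rewrite IH; simpl; lra.
Qed.

Lemma lsum_ext_in {T} (f g : T -> R) l :
  (forall x, In x l -> f x = g x) -> lsum f l = lsum g l.
Proof. induction l; simpl; intros H; auto; rewrite H, IHl; auto. Qed.

Lemma lsum_scal_r {T} (f : T -> R) c l : lsum (fun x => f x * c) l = lsum f l * c.
Proof. induction l; simpl; [lra | rewrite IHl; lra]. Qed.

Lemma lsum_eq0 {T} (f : T -> R) l : (forall x, In x l -> f x = 0) -> lsum f l = 0.
Proof. induction l; simpl; intros H; [lra|]; rewrite H, IHl; auto; lra. Qed.

Lemma lsum_ge0 {T} (f : T -> R) l : (forall x, In x l -> 0 <= f x) -> 0 <= lsum f l.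
Proof.
  induction l as [|x l IH]; simpl; intros H; [lra|].
  pose proof (H x (or_introl eq_refl)); pose proof (IH ltac:(auto)); lra.
Qed.

Lemma lsum_bounds {T} (f g : T -> R) l :
  (forall x, In x l -> 0 <= f x <= g x) -> 0 <= lsum f l <= lsum g l.
Proof.
  induction l as [|x l IH]; simpl; intros H; [lra|].
  pose proof (H x (or_introl eq_refl)); pose proof (IH ltac:(auto)); lra.
Qed.

Lemma lsum_rsum {T} (f : nat -> T -> R) l n :
  lsum (fun x => rsum n (fun k => f k x)) l = rsum n (fun k => lsum (f k) l).
Proof.
  induction l; simpl; [symmetry; apply rsum_eq0; auto|].
  rewrite IHl, <- rsum_plus; auto.
Qed.

Lemma splits_spec {T} (s : list T) s1 s2 :
  In (s1, s2) (splits s) -> s1 ++ s2 = s /\ (s1 = [] \/ (length s2 < length s)%nat).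
Proof.
  unfold splits; rewrite in_map_iff; intros [k [E _]]; injection E as <- <-.
  rewrite firstn_skipn, length_skipn; split; auto.
  destruct k, s; auto; right; simpl; lia.
Qed.

Lemma lim_Un_cv u l : Un_cv u l -> lim u = l.
Proof.
  intros H; unfold lim; apply (UL_sequence u); [|exact H].
  apply (epsilon_spec (inhabits 0) (fun l => Un_cv u l)); eauto.
Qed.

Lemma Un_cv_eventually_const u c : (exists N, forall n, (n >= N)%nat -> u n = c) -> Un_cv u c.
Proof.
  intros [N HN] eps Heps; exists N; intros n Hn.
  rewrite HN by auto; unfold Rdist; rewrite Rminus_diag, Rabs_R0; lra.
Qed.

Lemma Un_cv_const c : Un_cv (fun _ => c) c.
Proof. apply Un_cv_eventually_const; exists 0%nat; auto. Qed.

Lemma Un_cv_of_succ u l : Un_cv (fun n => u (S n)) l -> Un_cv u l.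
Proof.
  intros H; apply (CV_shift u 1); apply (Un_cv_ext (fun n => u (S n))); auto.
  intros n; rewrite Nat.add_1_r; auto.
Qed.

Lemma Un_cv_succ u l : Un_cv u l -> Un_cv (fun n => u (S n)) l.
Proof.
  intros H; apply (Un_cv_ext (fun n => u (n + 1)%nat)), CV_shift'; auto.
  intros n; rewrite Nat.add_1_r; auto.
Qed.

Lemma Un_cv_rsum m (f : nat -> nat -> R) g :
  (forall k, (k < m)%nat -> Un_cv (fun N => f N k) (g k)) ->
  Un_cv (fun N => rsum m (f N)) (rsum m g).
Proof.
  induction m as [|m IH]; intros H; simpl; [apply Un_cv_const|].
  apply CV_plus; [apply IH; intros; apply H | apply H]; lia.
Qed.

Lemma Un_cv_lsum {T} (f : nat -> T -> R) g l :
  (forall x, In x l -> Un_cv (fun N => f N x) (g x)) ->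
  Un_cv (fun N => lsum (f N) l) (lsum g l).
Proof. induction l; simpl; intros H; [apply Un_cv_const | apply CV_plus; auto]. Qed.

Lemma Un_cv_eventually_lt u l : Un_cv u l -> exists N, forall n, (n >= N)%nat -> u n < l + 1.
Proof.
  intros H; destruct (H 1 ltac:(lra)) as [N HN]; exists N; intros n Hn.
  specialize (HN n Hn); unfold Rdist in HN; apply Rabs_def2 in HN; lra.
Qed.

Lemma mul_bounds a b x y : 0 <= a <= x -> (x <> 0 -> 0 <= b <= y) -> 0 <= a * b <= x * y.
Proof.
  intros Ha Hb; destruct (Req_dec x 0) as [->|Hx].
  - replace a with 0 by lra; lra.
  - specialize (Hb Hx); split; nra.
Qed.

Lemma div_ge0 x y : 0 <= x -> 0 < y -> 0 <= x / y.
Proof. intros; unfold Rdiv; apply Rmult_le_pos; [|left; apply Rinv_0_lt_compat]; auto. Qed.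

Lemma weighted_bounds zi z p t :
  0 <= zi -> 0 < z -> (zi <> 0 -> 0 <= p <= t) -> 0 <= zi / z * p <= zi / z * t.
Proof.
  intros Hzi Hz H; apply mul_bounds; [pose proof (div_ge0 zi z Hzi Hz); lra|].
  intros Hw; apply H; intros E; apply Hw; rewrite E; unfold Rdiv; ring.
Qed.

(* The sequence [b] need not converge: its factor [a] is squeezed to [0] when [x = 0]. *)
Lemma Un_cv_mul_bounded (a b : nat -> R) x y :
  (forall n, 0 <= a n <= x) -> (x <> 0 -> Un_cv a x /\ Un_cv b y) ->
  Un_cv (fun n => a n * b n) (x * y).
Proof.
  intros Ha Hab; destruct (Req_dec x 0) as [->|Hx].
  - apply (Un_cv_ext (fun _ => 0 * y)); [|apply Un_cv_const].
    intros n; specialize (Ha n); replace (a n) with 0 by lra; ring.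
  - destruct (Hab Hx); apply CV_mult; auto.
Qed.

Lemma Un_cv_weighted zi z (p : nat -> R) t :
  (zi <> 0 -> Un_cv p t) -> Un_cv (fun n => zi / z * p n) (zi / z * t).
Proof.
  intros H; destruct (Req_dec zi 0) as [->|Hzi].
  - apply (Un_cv_ext (fun _ => 0 / z * t)); [intros; unfold Rdiv; ring | apply Un_cv_const].
  - apply CV_mult; auto using Un_cv_const.
Qed.

(* Matrices are total functions; only the [D x D] block is meaningful, so equalities
   between matrix expressions are stated up to [meq D]. *)
Definition meq (D : nat) (X Y : Mat) : Prop :=
  forall i j, (i < D)%nat -> (j < D)%nat -> X i j = Y i j.
Definition mscal (c : R) (X : Mat) : Mat := fun i j => c * X i j.

Lemma meq_refl D X : meq D X X.
Proof. red; auto. Qed.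

Lemma meq_sym D X Y : meq D X Y -> meq D Y X.
Proof. unfold meq; intros H i j Hi Hj; symmetry; auto. Qed.

Lemma meq_trans D X Y Z : meq D X Y -> meq D Y Z -> meq D X Z.
Proof. unfold meq; intros H1 H2 i j Hi Hj; rewrite H1; auto. Qed.

Lemma mmul_meq D X X' Y Y' : meq D X X' -> meq D Y Y' -> meq D (mmul D X Y) (mmul D X' Y').
Proof. unfold meq, mmul; intros HX HY i j Hi Hj; apply rsum_ext; intros; rewrite HX, HY; auto. Qed.

Lemma madd_meq D X X' Y Y' : meq D X X' -> meq D Y Y' -> meq D (madd X Y) (madd X' Y').
Proof. unfold meq, madd; intros HX HY i j Hi Hj; rewrite HX, HY; auto. Qed.

Lemma mtr_meq D X Y : meq D X Y -> meq D (mtr X) (mtr Y).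
Proof. unfold meq, mtr; auto. Qed.

Lemma mtrace_meq D X Y : meq D X Y -> mtrace D X = mtrace D Y.
Proof. unfold meq, mtrace; intros H; apply rsum_ext; auto. Qed.

Lemma mmul_assoc D X Y Z : mmul D (mmul D X Y) Z = mmul D X (mmul D Y Z).
Proof.
  extensionality i; extensionality j; unfold mmul.
  transitivity (rsum D (fun k => rsum D (fun l => X i l * Y l k * Z k j))).
  { apply rsum_ext; intros; rewrite <- rsum_scal_r; apply rsum_ext; intros; ring. }
  rewrite rsum_swap; apply rsum_ext; intros.
  rewrite <- rsum_scal_l; apply rsum_ext; intros; ring.
Qed.

Lemma mtr_mmul D X Y : mtr (mmul D X Y) = mmul D (mtr Y) (mtr X).
Proof. extensionality i; extensionality j; unfold mtr, mmul; apply rsum_ext; intros; ring. Qed.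

Lemma mtr_mid : mtr mid = mid.
Proof.
  extensionality i; extensionality j; unfold mtr, mid.
  destruct (Nat.eq_dec j i), (Nat.eq_dec i j); auto; lia.
Qed.

Lemma mtrace_mmulC D X Y : mtrace D (mmul D X Y) = mtrace D (mmul D Y X).
Proof.
  unfold mtrace, mmul; rewrite rsum_swap.
  apply rsum_ext; intros; apply rsum_ext; intros; ring.
Qed.

Lemma mmul1l D X : meq D (mmul D mid X) X.
Proof. unfold meq, mmul, mid; intros; apply (rsum_delta_l D i (fun k => X k j)); auto. Qed.

Lemma mmul1r D X : meq D (mmul D X mid) X.
Proof. unfold meq, mmul, mid; intros; apply (rsum_delta_r D j (fun k => X i k)); auto. Qed.

Lemma mmulDr D X Y Z : mmul D X (madd Y Z) = madd (mmul D X Y) (mmul D X Z).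
Proof.
  extensionality i; extensionality j; unfold mmul, madd.
  rewrite <- rsum_plus; apply rsum_ext; intros; ring.
Qed.

Lemma mmulDl D X Y Z : mmul D (madd X Y) Z = madd (mmul D X Z) (mmul D Y Z).
Proof.
  extensionality i; extensionality j; unfold mmul, madd.
  rewrite <- rsum_plus; apply rsum_ext; intros; ring.
Qed.

Lemma mmulZr D X c Y : mmul D X (mscal c Y) = mscal c (mmul D X Y).
Proof.
  extensionality i; extensionality j; unfold mmul, mscal.
  rewrite <- rsum_scal_l; apply rsum_ext; intros; ring.
Qed.

Lemma mmulZl D c X Y : mmul D (mscal c X) Y = mscal c (mmul D X Y).
Proof.
  extensionality i; extensionality j; unfold mmul, mscal.
  rewrite <- rsum_scal_l; apply rsum_ext; intros; ring.
Qed.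

Lemma mtraceD D X Y : mtrace D (madd X Y) = mtrace D X + mtrace D Y.
Proof. apply rsum_plus. Qed.

(** * Positive semidefinite matrices *)

Definition bil (n : nat) (Q : Mat) (x y : nat -> R) : R :=
  rsum n (fun i => rsum n (fun j => x i * Q i j * y j)).
Definition unit_vec (a : nat) : nat -> R := fun k => if Nat.eq_dec a k then 1 else 0.

Lemma bil_addl n Q x c z y : bil n Q (fun k => x k + c * z k) y = bil n Q x y + c * bil n Q z y.
Proof.
  unfold bil; rewrite <- rsum_scal_l, <- rsum_plus; apply rsum_ext; intros.
  rewrite <- rsum_scal_l, <- rsum_plus; apply rsum_ext; intros; ring.
Qed.

Lemma bil_addr n Q x c z y : bil n Q y (fun k => x k + c * z k) = bil n Q y x + c * bil n Q y z.
Proof.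
  unfold bil; rewrite <- rsum_scal_l, <- rsum_plus; apply rsum_ext; intros.
  rewrite <- rsum_scal_l, <- rsum_plus; apply rsum_ext; intros; ring.
Qed.

Lemma bil_linear_comb n Q x c z :
  bil n Q (fun k => x k + c * z k) (fun k => x k + c * z k) =
  bil n Q x x + c * (bil n Q x z + bil n Q z x) + c * c * bil n Q z z.
Proof. rewrite bil_addl, !bil_addr; ring. Qed.

Lemma bil_unit_l n Q a y : (a < n)%nat -> bil n Q (unit_vec a) y = rsum n (fun j => Q a j * y j).
Proof.
  intros Ha; unfold bil, unit_vec.
  rewrite <- (rsum_delta_l n a (fun i => rsum n (fun j => Q i j * y j))) by auto.
  apply rsum_ext; intros; rewrite <- rsum_scal_l; apply rsum_ext; intros; ring.
Qed.

Lemma bil_unit_r n Q x b : (b < n)%nat -> bil n Q x (unit_vec b) = rsum n (fun i => x i * Q i b).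
Proof.
  intros Hb; unfold bil, unit_vec; apply rsum_ext; intros i _.
  rewrite <- (rsum_delta_l n b (fun j => x i * Q i j)) by auto; apply rsum_ext; intros; ring.
Qed.

Lemma bil_unit n Q a b : (a < n)%nat -> (b < n)%nat -> bil n Q (unit_vec a) (unit_vec b) = Q a b.
Proof.
  intros Ha Hb; rewrite bil_unit_l by auto; unfold unit_vec.
  rewrite <- (rsum_delta_l n b (Q a)) by auto; apply rsum_ext; intros; ring.
Qed.

Lemma PSD_bil_ge0 n Q x : PSD n Q -> 0 <= bil n Q x x.
Proof. intros [_ HQ]; apply HQ. Qed.

Lemma PSD_diag_ge0 n Q a : PSD n Q -> (a < n)%nat -> 0 <= Q a a.
Proof. intros HQ Ha; rewrite <- (bil_unit n Q a a) by auto; apply PSD_bil_ge0, HQ. Qed.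

(* Testing the form on [e_i + t e_a] with [t] chosen to make it negative. *)
Lemma PSD_diag0_col n Q i a : PSD n Q -> (i < n)%nat -> (a < n)%nat -> Q a a = 0 -> Q i a = 0.
Proof.
  intros HQ Hi Ha Haa; destruct (Req_dec (Q i a) 0) as [E|E]; auto; exfalso.
  set (t := - (Q i i + 1) / (2 * Q i a)).
  pose proof (PSD_bil_ge0 n Q (fun k => unit_vec i k + t * unit_vec a k) HQ) as Hq.
  rewrite bil_linear_comb, !bil_unit, (proj1 HQ a i), Haa in Hq by auto.
  replace (t * (Q i a + Q i a)) with (- (Q i i + 1)) in Hq by (unfold t; field; auto); lra.
Qed.

Lemma PSD_restrict n Q : PSD (S n) Q -> PSD n Q.
Proof.
  intros HQ; split; [intros; apply (proj1 HQ); lia|]; intros x.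
  set (x' := fun k => if Nat.eq_dec k n then 0 else x k).
  enough (E : rsum n (fun i => rsum n (fun j => x i * Q i j * x j)) = bil (S n) Q x' x')
    by (rewrite E; apply PSD_bil_ge0; auto).
  unfold bil; simpl.
  replace (x' n) with 0 by (unfold x'; destruct (Nat.eq_dec n n); [lra | lia]).
  rewrite (rsum_eq0 n (fun j => 0 * Q n j * x' j)) by (intros; ring).
  transitivity (rsum n (fun i => rsum n (fun j => x' i * Q i j * x' j) + x' i * Q i n * 0)); [|ring].
  apply rsum_ext; intros i Hi; rewrite Rmult_0_r, Rplus_0_r.
  apply rsum_ext; intros j Hj; unfold x'.
  destruct (Nat.eq_dec i n), (Nat.eq_dec j n); try lia; auto.
Qed.

(* The Schur complement of the last pivot, as an [(n+1) x (n+1)] matrix whose last row and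
   column vanish. *)
Definition schur_last (n : nat) (A : Mat) : Mat := fun i j => A i j - A i n * A j n / A n n.

Lemma sq_rsum n (z : nat -> R) : rsum n (fun i => rsum n (fun j => z i * z j)) = rsum n z * rsum n z.
Proof. rewrite <- rsum_scal_r; apply rsum_ext; intros; apply rsum_scal_l. Qed.

Lemma PSD_schur_last n A : PSD (S n) A -> 0 < A n n -> PSD (S n) (schur_last n A).
Proof.
  intros HA Ha; split.
  { intros i j Hi Hj; unfold schur_last; rewrite (proj1 HA i j) by auto; field; lra. }
  intros x; set (a := A n n) in *; set (s := rsum (S n) (fun i => x i * A i n)).
  (* [x - (s/a) e_n] has form value [x^T A x - s^2/a], which is [x^T (schur_last n A) x]. *)
  pose proof (PSD_bil_ge0 _ _ (fun k => x k + - (s / a) * unit_vec n k) HA) as Hy.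
  rewrite bil_linear_comb, bil_unit, bil_unit_r, bil_unit_l in Hy by lia.
  rewrite (rsum_ext (S n) (fun j => A n j * x j) (fun i => x i * A i n)) in Hy
    by (intros; rewrite (proj1 HA n k) by lia; ring).
  fold s a in Hy.
  replace (rsum (S n) (fun i => rsum (S n) (fun j => x i * schur_last n A i j * x j)))
    with (bil (S n) A x x - s * s / a).
  { replace (bil (S n) A x x + - (s / a) * (s + s) + - (s / a) * - (s / a) * a)
      with (bil (S n) A x x - s * s / a) in Hy by (field; lra); auto. }
  unfold bil, schur_last, s; fold a; rewrite <- sq_rsum; unfold Rdiv.
  rewrite <- rsum_scal_r, <- rsum_minus; apply rsum_ext; intros.
  rewrite <- rsum_scal_r, <- rsum_minus; apply rsum_ext; intros; ring.
Qed.

Lemma mtrace_mmul_schur_last n A B :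
  PSD (S n) B -> 0 < A n n ->
  mtrace (S n) (mmul (S n) A B) =
  mtrace (S n) (mmul (S n) (schur_last n A) B) + bil (S n) B (fun i => A i n) (fun i => A i n) / A n n.
Proof.
  intros HB Ha; unfold mtrace, mmul, bil, Rdiv.
  rewrite <- rsum_scal_r, <- rsum_plus; apply rsum_ext; intros i Hi.
  rewrite <- rsum_scal_r, <- rsum_plus; apply rsum_ext; intros k Hk.
  unfold schur_last; rewrite (proj1 HB i k) by auto; field; lra.
Qed.

Lemma mtrace_mmul_last0 n A B :
  (forall i, (i <= n)%nat -> A i n = 0 /\ A n i = 0) ->
  mtrace (S n) (mmul (S n) A B) = mtrace n (mmul n A B).
Proof.
  intros H; unfold mtrace, mmul; simpl; rewrite (proj1 (H n ltac:(lia))).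
  rewrite (rsum_eq0 n (fun k => A n k * B k n))
    by (intros k Hk; rewrite (proj2 (H k ltac:(lia))); ring).
  rewrite Rplus_0_l, Rmult_0_l, Rplus_0_r; apply rsum_ext; intros i Hi.
  rewrite (proj1 (H i ltac:(lia))); ring.
Qed.

(* Induction on the dimension: eliminating the last pivot of [A] splits [Tr(AB)] into the
   trace for the Schur complement and the nonnegative term [q^T B q / a]. *)
Lemma PSD_mtrace_mmul_ge0 n A B : PSD n A -> PSD n B -> 0 <= mtrace n (mmul n A B).
Proof.
  revert A B; induction n as [|n IH]; intros A B HA HB; [unfold mtrace; simpl; lra|].
  pose proof (PSD_diag_ge0 _ _ n HA ltac:(lia)) as Ha.
  destruct (Req_dec (A n n) 0) as [Ha0|Ha0].
  - rewrite mtrace_mmul_last0; [apply IH; apply PSD_restrict; auto|].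
    intros i Hi; assert (A i n = 0) by (apply (PSD_diag0_col (S n)); auto; lia).
    split; auto; rewrite (proj1 HA) by lia; auto.
  - rewrite mtrace_mmul_schur_last by (auto; lra); apply Rplus_le_le_0_compat.
    + rewrite mtrace_mmul_last0.
      * apply IH; apply PSD_restrict; auto; apply PSD_schur_last; auto; lra.
      * intros i Hi; unfold schur_last; split; [|rewrite (proj1 HA n i) by lia]; field; auto.
    + apply Rmult_le_pos; [apply PSD_bil_ge0; auto|].
      left; apply Rinv_0_lt_compat; lra.
Qed.

Lemma PSD_madd n X Y : PSD n X -> PSD n Y -> PSD n (madd X Y).
Proof.
  intros [Hs Hq] [Hs' Hq']; split; [intros; unfold madd; rewrite Hs, Hs'; auto|].
  intros x; specialize (Hq x); specialize (Hq' x); unfold madd.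
  replace (rsum n (fun i => rsum n (fun j => x i * (X i j + Y i j) * x j)))
    with (rsum n (fun i => rsum n (fun j => x i * X i j * x j) + rsum n (fun j => x i * Y i j * x j)));
    [rewrite rsum_plus; lra|].
  apply rsum_ext; intros; rewrite <- rsum_plus; apply rsum_ext; intros; ring.
Qed.

Lemma PSD_mid n : PSD n mid.
Proof.
  split; [intros; unfold mid; destruct (Nat.eq_dec i j), (Nat.eq_dec j i); auto; lia|].
  intros x; apply rsum_ge0; intros i Hi.
  rewrite (rsum_ext n _ (fun j => (if Nat.eq_dec i j then 1 else 0) * (x i * x j)))
    by (intros; unfold mid; destruct (Nat.eq_dec i k); ring).
  rewrite rsum_delta_l by auto; apply Rle_0_sqr.
Qed.

Lemma rsum4_reorder n (f : nat -> nat -> nat -> nat -> R) :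
  rsum n (fun l => rsum n (fun k => rsum n (fun i => rsum n (fun j => f i j k l)))) =
  rsum n (fun i => rsum n (fun j => rsum n (fun k => rsum n (fun l => f i j k l)))).
Proof.
  rewrite rsum_swap.
  transitivity (rsum n (fun k => rsum n (fun i => rsum n (fun l => rsum n (fun j => f i j k l))))).
  { apply rsum_ext; intros; apply rsum_swap. }
  rewrite rsum_swap.
  transitivity (rsum n (fun i => rsum n (fun k => rsum n (fun j => rsum n (fun l => f i j k l))))).
  { apply rsum_ext; intros; apply rsum_ext; intros; apply rsum_swap. }
  apply rsum_ext; intros; apply rsum_swap.
Qed.

Lemma bil_cong n Q M x :
  bil n (mmul n (mmul n M Q) (mtr M)) x x =
  bil n Q (fun l => rsum n (fun i => x i * M i l)) (fun l => rsum n (fun i => x i * M i l)).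
Proof.
  unfold bil, mmul, mtr; symmetry.
  transitivity (rsum n (fun l => rsum n (fun k => rsum n (fun i => rsum n (fun j =>
                  x i * M i l * Q l k * M j k * x j))))).
  { apply rsum_ext; intros; apply rsum_ext; intros.
    rewrite <- !rsum_scal_r; apply rsum_ext; intros.
    rewrite <- rsum_scal_l; apply rsum_ext; intros; ring. }
  rewrite rsum4_reorder; apply rsum_ext; intros; apply rsum_ext; intros.
  rewrite <- rsum_scal_l, <- rsum_scal_r; apply rsum_ext; intros.
  rewrite <- rsum_scal_r, <- rsum_scal_l, <- rsum_scal_r; apply rsum_ext; intros; ring.
Qed.

Lemma PSD_cong n Q M : PSD n Q -> PSD n (mmul n (mmul n M Q) (mtr M)).
Proof.
  intros HQ; split.
  - intros i j Hi Hj; unfold mmul, mtr.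
    transitivity (rsum n (fun k => rsum n (fun l => M i l * Q l k * M j k))).
    { apply rsum_ext; intros; rewrite <- rsum_scal_r; apply rsum_ext; intros; ring. }
    rewrite rsum_swap; apply rsum_ext; intros l Hl; rewrite <- rsum_scal_r; apply rsum_ext; intros k Hk.
    rewrite (proj1 HQ) by auto; ring.
  - intros x; pose proof (bil_cong n Q M x) as E; unfold bil at 1 in E; rewrite E.
    apply PSD_bil_ge0; auto.
Qed.

Lemma PSD_lim n (X : nat -> Mat) Y :
  (forall N, PSD n (X N)) ->
  (forall i j, (i < n)%nat -> (j < n)%nat -> Un_cv (fun N => X N i j) (Y i j)) -> PSD n Y.
Proof.
  intros HX Hcv; split.
  - intros i j Hi Hj; apply (UL_sequence (fun N => X N i j)); auto.
    apply (Un_cv_ext (fun N => X N j i)); auto; intros; rewrite (proj1 (HX n0)); auto.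
  - intros x; apply (@Rle_cv_lim (fun _ => 0) (fun N => bil n (X N) x x)).
    + intros; apply PSD_bil_ge0; auto.
    + apply Un_cv_const.
    + unfold bil; apply Un_cv_rsum; intros i Hi; apply Un_cv_rsum; intros j Hj.
      apply CV_mult; [apply CV_mult|]; auto using Un_cv_const.
Qed.

(* Linearity is only asked on the [D x D] block, so [T] must also respect [meq D]. *)
Definition linear_op (D : nat) (T : Mat -> Mat) : Prop :=
  (forall X Y, meq D X Y -> meq D (T X) (T Y)) /\
  (forall X Y, meq D (T (madd X Y)) (madd (T X) (T Y))) /\
  (forall c X, meq D (T (mscal c X)) (mscal c (T X))).

Lemma linear_op_comp D T1 T2 : linear_op D T1 -> linear_op D T2 -> linear_op D (fun Q => T1 (T2 Q)).
Proof.
  intros (H1 & A1 & S1) (H2 & A2 & S2); split; [|split]; intros.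
  - apply H1, H2; auto.
  - eapply meq_trans; [apply H1, A2 | apply A1].
  - eapply meq_trans; [apply H1, S2 | apply S1].
Qed.

Lemma linear_op_madd D T1 T2 :
  linear_op D T1 -> linear_op D T2 -> linear_op D (fun Q => madd (T1 Q) (T2 Q)).
Proof.
  intros (H1 & A1 & S1) (H2 & A2 & S2); split; [|split]; intros.
  - apply madd_meq; auto.
  - intros i j Hi Hj; unfold madd at 1; rewrite A1, A2 by auto; unfold madd; ring.
  - intros i j Hi Hj; unfold madd at 1; rewrite S1, S2 by auto; unfold madd, mscal; ring.
Qed.

Lemma linear_op_cong D M : linear_op D (fun Q => mmul D (mmul D M Q) (mtr M)).
Proof.
  split; [|split]; intros.
  - apply mmul_meq; [apply mmul_meq|]; auto using meq_refl.
  - rewrite mmulDr, mmulDl; apply meq_refl.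
  - rewrite mmulZr, mmulZl; apply meq_refl.
Qed.

Lemma linear_op_lim D (Ts : nat -> Mat -> Mat) T :
  (forall N, linear_op D (Ts N)) ->
  (forall Q i j, (i < D)%nat -> (j < D)%nat -> Un_cv (fun N => Ts N Q i j) (T Q i j)) ->
  linear_op D T.
Proof.
  intros HTs Hcv; split; [|split]; intros; intros i j Hi Hj.
  - apply (UL_sequence (fun N => Ts N X i j)); auto.
    apply (Un_cv_ext (fun N => Ts N Y i j)); auto.
    intros N; symmetry; apply (proj1 (HTs N)); auto.
  - apply (UL_sequence (fun N => Ts N (madd X Y) i j)); auto.
    apply (Un_cv_ext (fun N => Ts N X i j + Ts N Y i j)); [|apply CV_plus; auto].
    intros N; symmetry; apply (proj1 (proj2 (HTs N))); auto.
  - apply (UL_sequence (fun N => Ts N (mscal c X) i j)); auto.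
    apply (Un_cv_ext (fun N => c * Ts N X i j)); [|apply CV_mult; auto using Un_cv_const].
    intros N; symmetry; apply (proj2 (proj2 (HTs N))); auto.
Qed.

Definition munit (k l : nat) : Mat := fun i j => unit_vec k i * unit_vec l j.

Section LinearOp.

Variable D : nat.
Variable T : Mat -> Mat.
Hypothesis HT : linear_op D T.

Lemma iter_op_linear n : linear_op D (iter_op T n).
Proof.
  induction n as [|n IH]; simpl.
  - split; [|split]; intros; apply meq_refl || auto.
  - apply (linear_op_comp D T (iter_op T n)); auto.
Qed.

Lemma psum_op_linear N : linear_op D (psum_op T N).
Proof.
  induction N as [|N IH]; simpl; [apply iter_op_linear with (n := 0%nat)|].
  apply (linear_op_madd D (psum_op T N) (iter_op T (S N))); auto using iter_op_linear.
Qed.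

Lemma psum_op_succ N Q : meq D (psum_op T (S N) Q) (madd Q (T (psum_op T N Q))).
Proof.
  induction N as [|N IH]; [apply meq_refl|]; intros i j Hi Hj.
  change (psum_op T (S (S N)) Q i j) with (psum_op T (S N) Q i j + T (iter_op T (S N) Q) i j).
  rewrite IH by auto.
  change (psum_op T (S N) Q) with (madd (psum_op T N Q) (iter_op T (S N) Q)).
  unfold madd at 1 2; rewrite (proj1 (proj2 HT) (psum_op T N Q) (iter_op T (S N) Q) i j Hi Hj).
  unfold madd; ring.
Qed.

Lemma linear_op_rsum n (F : nat -> Mat) :
  meq D (T (fun i j => rsum n (fun k => F k i j))) (fun i j => rsum n (fun k => T (F k) i j)).
Proof.
  destruct HT as (Hm & Ha & Hs); induction n as [|n IH].
  - intros i j Hi Hj; simpl; transitivity (T (mscal 0 mid) i j).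
    + apply Hm; auto; intros a b _ _; unfold mscal; ring.
    + rewrite Hs by auto; unfold mscal; ring.
  - change (fun i j => rsum (S n) (fun k => F k i j))
      with (madd (fun i j => rsum n (fun k => F k i j)) (F n)).
    eapply meq_trans; [apply Ha|]; intros i j Hi Hj; unfold madd; rewrite IH by auto; auto.
Qed.

Lemma linear_op_repr Q i j : (i < D)%nat -> (j < D)%nat ->
  T Q i j = rsum D (fun k => rsum D (fun l => Q k l * T (munit k l) i j)).
Proof.
  intros Hi Hj.
  transitivity (T (fun a b => rsum D (fun k => rsum D (fun l => mscal (Q k l) (munit k l) a b))) i j).
  { apply (proj1 HT); auto; intros a b Ha Hb; unfold mscal, munit, unit_vec.
    rewrite <- (rsum_delta_l D a (fun k => Q k b)) by auto; apply rsum_ext; intros k _.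
    rewrite (rsum_ext D _ (fun l => Q k l * (if Nat.eq_dec k a then 1 else 0) *
                                   (if Nat.eq_dec l b then 1 else 0)))
      by (intros; ring).
    rewrite rsum_delta_r by auto; destruct (Nat.eq_dec a k), (Nat.eq_dec k a); try lia; ring. }
  rewrite linear_op_rsum by auto; apply rsum_ext; intros k _.
  rewrite (linear_op_rsum D (fun l => mscal (Q k l) (munit k l))) by auto.
  apply rsum_ext; intros l _; rewrite (proj2 (proj2 HT)) by auto; auto.
Qed.

Lemma linear_op_continuous (Qs : nat -> Mat) Q :
  (forall i j, (i < D)%nat -> (j < D)%nat -> Un_cv (fun N => Qs N i j) (Q i j)) ->
  forall i j, (i < D)%nat -> (j < D)%nat -> Un_cv (fun N => T (Qs N) i j) (T Q i j).
Proof.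
  intros Hcv i j Hi Hj; rewrite linear_op_repr by auto.
  apply (Un_cv_ext (fun N => rsum D (fun k => rsum D (fun l => Qs N k l * T (munit k l) i j))));
    [intros; rewrite linear_op_repr; auto|].
  apply Un_cv_rsum; intros k Hk; apply Un_cv_rsum; intros l Hl.
  apply CV_mult; auto using Un_cv_const.
Qed.

End LinearOp.

(** * Transfer operators and unnormalized probabilities *)

Section Transfer.

Variables (D d : nat) (A : Fin.t d -> Mat).

Lemma Er_star_cv e1 Q i j : Conv D A (Star e1) -> (i < D)%nat -> (j < D)%nat ->
  Un_cv (fun N => psum_op (Er D A e1) N Q i j) (Er D A (Star e1) Q i j).
Proof.
  intros [_ H] Hi Hj; destruct (H Q i j Hi Hj) as [l Hl]; simpl; unfold mlim.
  rewrite (lim_Un_cv _ l Hl); auto.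
Qed.

Lemma Er_linear e : Conv D A e -> linear_op D (Er D A e).
Proof.
  induction e as [c|e1 IH1 e2 IH2|e1 IH1 e2 IH2|e1 IH1]; simpl; intros HC.
  - apply linear_op_cong.
  - apply linear_op_comp; tauto.
  - apply linear_op_madd; tauto.
  - apply (linear_op_lim D (psum_op (Er D A e1))).
    + intros; apply psum_op_linear; tauto.
    + intros; apply (Er_star_cv e1); auto.
Qed.

Lemma Er_star_fix e1 Q : Conv D A (Star e1) ->
  meq D (Er D A (Star e1) Q) (madd Q (Er D A e1 (Er D A (Star e1) Q))).
Proof.
  intros HC i j Hi Hj; pose proof (Er_linear e1 (proj1 HC)) as Hlin.
  apply (UL_sequence (fun N => psum_op (Er D A e1) (S N) Q i j)).
  - apply (Un_cv_succ (fun N => psum_op (Er D A e1) N Q i j)), Er_star_cv; auto.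
  - apply (Un_cv_ext (fun N => Q i j + Er D A e1 (psum_op (Er D A e1) N Q) i j)).
    + intros; rewrite (psum_op_succ D); auto.
    + apply CV_plus; [apply Un_cv_const|].
      apply (linear_op_continuous D); auto; intros; apply Er_star_cv; auto.
Qed.

Lemma Er_PSD e Q : Conv D A e -> PSD D Q -> PSD D (Er D A e Q).
Proof.
  revert Q; induction e as [c|e1 IH1 e2 IH2|e1 IH1 e2 IH2|e1 IH1]; simpl; intros Q HC HQ.
  - apply PSD_cong; auto.
  - apply IH1, IH2; tauto.
  - apply PSD_madd; [apply IH1 | apply IH2]; tauto.
  - assert (Hit : forall n, PSD D (iter_op (Er D A e1) n Q))
      by (induction n; simpl; auto; apply IH1; tauto).
    apply (PSD_lim D (fun N => psum_op (Er D A e1) N Q)).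
    + induction N as [|N IHN]; [exact HQ | apply PSD_madd; [exact IHN | apply (Hit (S N))]].
    + intros; apply (Er_star_cv e1); auto.
Qed.

Lemma Aword_app s1 s2 : meq D (Aword D A (s1 ++ s2)) (mmul D (Aword D A s1) (Aword D A s2)).
Proof.
  induction s1 as [|c s1 IH]; simpl.
  - apply meq_sym, mmul1l.
  - rewrite mmul_assoc; apply mmul_meq; auto using meq_refl.
Qed.

Lemma El_word_PSD s Q : PSD D Q -> PSD D (El_word D A s Q).
Proof. apply (PSD_cong D Q (mtr (Aword D A s))). Qed.

(* Cyclicity of the trace moves [A(s)] from the right operator onto the left one. *)
Lemma Ptilde_El s Ql X : Ptilde D A s Ql X = mtrace D (mmul D (El_word D A s Ql) X).
Proof.
  unfold Ptilde, El_word; rewrite <- !mmul_assoc, mtrace_mmulC, <- !mmul_assoc; reflexivity.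
Qed.

Lemma Ptilde_Er s e Ql Qr : Ptilde D A s Ql (Er D A e Qr) = ZR D A e (El_word D A s Ql) Qr.
Proof. apply Ptilde_El. Qed.

Lemma Ptilde_app s1 s2 Ql Qr :
  Ptilde D A s2 (El_word D A s1 Ql) Qr = Ptilde D A (s1 ++ s2) Ql Qr.
Proof.
  unfold Ptilde, El_word.
  set (W1 := Aword D A s1); set (W2 := Aword D A s2).
  transitivity (mtrace D (mmul D Ql (mmul D (mmul D (mmul D W1 W2) Qr) (mtr (mmul D W1 W2))))).
  - rewrite mtr_mmul, !mmul_assoc, mtrace_mmulC, !mmul_assoc; reflexivity.
  - apply mtrace_meq, mmul_meq, mmul_meq; [apply meq_refl| apply mmul_meq | apply mtr_meq];
      auto using meq_refl, meq_sym, Aword_app.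
Qed.

Lemma Ptilde_nil Ql Qr : Ptilde D A [] Ql Qr = mtrace D (mmul D Ql Qr).
Proof.
  unfold Ptilde; simpl; rewrite mtr_mid.
  apply mtrace_meq, mmul_meq; [apply meq_refl|].
  eapply meq_trans; [apply mmul1r | apply mmul1l].
Qed.

Lemma Ptilde_single c Ql Qr : Ptilde D A [c] Ql Qr = ZR D A (Chr c) Ql Qr.
Proof.
  unfold Ptilde, ZR; simpl.
  apply mtrace_meq, mmul_meq; [apply meq_refl|].
  apply mmul_meq; [apply mmul_meq|apply mtr_meq]; auto using mmul1r, meq_refl.
Qed.

Lemma Ptilde_ge0 s Ql Qr : PSD D Ql -> PSD D Qr -> 0 <= Ptilde D A s Ql Qr.
Proof. intros; apply PSD_mtrace_mmul_ge0, PSD_cong; auto. Qed.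

Lemma ZR_ge0 e Ql Qr : Conv D A e -> PSD D Ql -> PSD D Qr -> 0 <= ZR D A e Ql Qr.
Proof. intros; apply PSD_mtrace_mmul_ge0, Er_PSD; auto. Qed.

Lemma ZR_alt e1 e2 Ql Qr : ZR D A (Alt e1 e2) Ql Qr = ZR D A e1 Ql Qr + ZR D A e2 Ql Qr.
Proof. unfold ZR; simpl; rewrite mmulDr, mtraceD; auto. Qed.

Lemma ZR_star e1 Ql Qr : Conv D A (Star e1) ->
  ZR D A (Star e1) Ql Qr = mtrace D (mmul D Ql Qr) + ZR D A (Cat e1 (Star e1)) Ql Qr.
Proof.
  intros HC; unfold ZR; rewrite <- mtraceD, <- mmulDr.
  apply mtrace_meq, mmul_meq; [apply meq_refl | apply Er_star_fix; auto].
Qed.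

Lemma ZR_pos_dim e Ql Qr : 0 < ZR D A e Ql Qr -> (0 < D)%nat.
Proof. unfold ZR, mtrace; destruct D; simpl; [lra | lia]. Qed.

End Transfer.

(** * Match counts *)

Definition is_nil {d} (s : word d) : R := match s with [] => 1 | _ => 0 end.

Lemma star_pow_nil {d} (f : word d -> R) n : star_pow f n [] = f [] ^ n.
Proof. induction n; simpl; auto; rewrite IHn; ring. Qed.

Lemma star_pow_ge0 {d} (f : word d -> R) n s : (forall t, 0 <= f t) -> 0 <= star_pow f n s.
Proof.
  intros Hf; revert s; induction n as [|n IH]; intros s; [destruct s; simpl; lra|].
  apply lsum_ge0; intros; apply Rmult_le_pos; auto.
Qed.

(* When [f []] vanishes every factor consumes a letter, so at most [length s] factors fit. *)
Lemma star_pow_long {d} (f : word d -> R) n s :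
  f [] = 0 -> (length s < n)%nat -> star_pow f n s = 0.
Proof.
  intros H0; revert s; induction n as [|n IH]; intros s Hs; [lia|].
  apply lsum_eq0; intros [s1 s2] Hp; cbn [fst snd].
  destruct (splits_spec s s1 s2 Hp) as [_ [->|Hlt]].
  - rewrite H0; ring.
  - rewrite IH by lia; ring.
Qed.

Lemma star_psum_stable {d} (f : word d -> R) s N :
  f [] = 0 -> (length s <= N)%nat ->
  rsum (S N) (fun n => star_pow f n s) = rsum (S (length s)) (fun n => star_pow f n s).
Proof.
  intros H0 HN; induction N as [|N IH].
  - replace (length s) with 0%nat by lia; auto.
  - destruct (Nat.eq_dec (length s) (S N)) as [->|Hne]; auto.
    change (rsum (S (S N)) (fun n => star_pow f n s))
      with (rsum (S N) (fun n => star_pow f n s) + star_pow f (S N) s).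
    rewrite star_pow_long, IH by (auto; lia); ring.
Qed.

Section Counts.

Variables (D d : nat) (A : Fin.t d -> Mat).
Hypothesis HD : (0 < D)%nat.

(* If the body of a convergent star matched the empty word, the identity would be iterated
   at least once per term: the partial sums at [(0,0)] would grow like [N]. *)
Lemma count_nil_star_body e1 :
  Conv D A (Star e1) ->
  (exists k, count e1 [] = INR k) ->
  (forall Q a, PSD D Q -> (a < D)%nat -> count e1 [] * Q a a <= Er D A e1 Q a a) ->
  count e1 [] = 0.
Proof.
  intros HC [[|k] Hk] Hle; [auto|exfalso].
  assert (Hc : 1 <= count e1 []) by (rewrite Hk, S_INR; pose proof (pos_INR k); lra).
  assert (Hit : forall n,
            PSD D (iter_op (Er D A e1) n mid) /\ 1 <= iter_op (Er D A e1) n mid 0%nat 0%nat).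
  { induction n as [|n [HP Hv]]; simpl.
    - split; [apply PSD_mid | unfold mid; simpl; lra].
    - split; [apply Er_PSD; [apply HC | exact HP]|].
      specialize (Hle _ 0%nat HP HD); nra. }
  assert (Hps : forall N, INR (S N) <= psum_op (Er D A e1) N mid 0%nat 0%nat).
  { induction N as [|N IH]; [simpl; unfold mid; simpl; lra|].
    change (psum_op (Er D A e1) (S N) mid 0%nat 0%nat)
      with (psum_op (Er D A e1) N mid 0%nat 0%nat + iter_op (Er D A e1) (S N) mid 0%nat 0%nat).
    rewrite S_INR; pose proof (proj2 (Hit (S N))); lra. }
  destruct (Un_cv_eventually_lt _ _ (Er_star_cv D d A e1 mid 0 0 HC HD HD)) as [N0 HN0].
  destruct (INR_archimed 1 (Er D A (Star e1) mid 0%nat 0%nat + 1) ltac:(lra)) as [m Hm].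
  specialize (HN0 (N0 + m)%nat ltac:(lia)); specialize (Hps (N0 + m)%nat).
  rewrite S_INR, plus_INR in Hps; pose proof (pos_INR N0); lra.
Qed.

(* The two conjuncts must be proved together: for a star, each needs both for its body. *)
Lemma count_nil_spec e : Conv D A e ->
  (exists k, count e [] = INR k) /\
  (forall Q a, PSD D Q -> (a < D)%nat -> count e [] * Q a a <= Er D A e Q a a).
Proof.
  induction e as [c|e1 IH1 e2 IH2|e1 IH1 e2 IH2|e1 IH1]; intros HC.
  - split; [exists 0%nat; auto|].
    intros Q a HQ Ha; simpl; rewrite Rmult_0_l.
    apply (PSD_diag_ge0 D); auto; apply (Er_PSD D d A (Chr c) Q); simpl; auto.
  - destruct HC as [H1 H2], (IH1 H1) as [[k1 K1] B1], (IH2 H2) as [[k2 K2] B2].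
    change (count (Cat e1 e2) []) with (count e1 [] * count e2 [] + 0); rewrite Rplus_0_r.
    split; [exists (k1 * k2)%nat; rewrite mult_INR, K1, K2; auto|].
    intros Q a HQ Ha; simpl.
    specialize (B2 Q a HQ Ha); specialize (B1 _ a (Er_PSD D d A e2 Q H2 HQ) Ha).
    pose proof (pos_INR k1); rewrite <- K1 in *; nra.
  - destruct HC as [H1 H2], (IH1 H1) as [[k1 K1] B1], (IH2 H2) as [[k2 K2] B2]; simpl.
    split; [exists (k1 + k2)%nat; rewrite plus_INR, K1, K2; auto|].
    intros Q a HQ Ha; specialize (B1 Q a HQ Ha); specialize (B2 Q a HQ Ha); unfold madd; lra.
  - destruct (IH1 (proj1 HC)) as [K1 B1].
    pose proof (count_nil_star_body e1 HC K1 B1) as Z.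
    assert (C1 : count (Star e1) [] = 1).
    { cbn [count]; apply lim_Un_cv, Un_cv_eventually_const; exists 0%nat; intros n _.
      rewrite rsum_shift, rsum_eq0; [simpl; lra|].
      intros; rewrite star_pow_nil, Z; simpl; ring. }
    rewrite C1; split; [exists 1%nat; simpl; auto|].
    intros Q a HQ Ha; rewrite Rmult_1_l.
    assert (Hit : forall n, PSD D (iter_op (Er D A e1) n Q))
      by (induction n; simpl; auto; apply Er_PSD; auto; apply HC).
    apply (@Rle_cv_lim (fun _ => Q a a) (fun N => psum_op (Er D A e1) N Q a a)).
    + induction n as [|N IHN]; simpl; [lra|].
      pose proof (PSD_diag_ge0 D _ a (Hit (S N)) Ha); unfold madd; simpl in *; lra.
    + apply Un_cv_const.
    + apply Er_star_cv; auto.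
Qed.

Lemma count_nil_star_body_eq0 e1 : Conv D A (Star e1) -> count e1 [] = 0.
Proof.
  intros HC; destruct (count_nil_spec e1 (proj1 HC)) as [K B].
  apply count_nil_star_body; auto.
Qed.

Lemma count_star_finite e1 s : Conv D A (Star e1) ->
  count (Star e1) s = rsum (S (length s)) (fun n => star_pow (count e1) n s).
Proof.
  intros HC; simpl; apply lim_Un_cv, Un_cv_eventually_const; exists (length s); intros n Hn.
  apply star_psum_stable; auto; apply count_nil_star_body_eq0; auto.
Qed.

Lemma count_ge0 e s : Conv D A e -> 0 <= count e s.
Proof.
  revert s; induction e as [c|e1 IH1 e2 IH2|e1 IH1 e2 IH2|e1 IH1]; intros s HC.
  - simpl; unfold is_single; destruct s as [|c' [|]]; try lra; destruct (Fin.eq_dec c c'); lra.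
  - apply lsum_ge0; intros; apply Rmult_le_pos; [apply IH1, HC | apply IH2, HC].
  - simpl; pose proof (IH1 s (proj1 HC)); pose proof (IH2 s (proj2 HC)); lra.
  - rewrite count_star_finite by auto; apply rsum_ge0; intros.
    apply star_pow_ge0; intros; apply IH1, HC.
Qed.

Lemma count_star_unfold e1 s : Conv D A (Star e1) ->
  count (Star e1) s = is_nil s + count (Cat e1 (Star e1)) s.
Proof.
  intros HC; pose proof (count_nil_star_body_eq0 e1 HC) as Z.
  rewrite count_star_finite, <- (star_psum_stable _ s (S (length s))), rsum_shift by (auto; lia).
  change (count (Cat e1 (Star e1)) s)
    with (lsum (fun p => count e1 (fst p) * count (Star e1) (snd p)) (splits s)).
  f_equal.
  transitivity (lsum (fun p => rsum (S (length s)) (fun k =>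
                  count e1 (fst p) * star_pow (count e1) k (snd p))) (splits s)).
  - rewrite lsum_rsum; apply rsum_ext; auto.
  - apply lsum_ext_in; intros [s1 s2] Hp; cbn [fst snd].
    rewrite rsum_scal_l, count_star_finite by auto; f_equal.
    apply star_psum_stable; auto.
    destruct (splits_spec s s1 s2 Hp) as [<- _]; rewrite length_app; lia.
Qed.

End Counts.

(** * The target distribution *)

Definition target (D : nat) {d} (A : Fin.t d -> Mat) (e : regex d) (Ql Qr : Mat) (s : word d) : R :=
  count e s * Ptilde D A s Ql Qr / ZR D A e Ql Qr.

(* The hypotheses on a call of SAMPLE; every recursive call made with positive probability
   inherits them. *)
Definition admissible (D : nat) {d} (A : Fin.t d -> Mat) (e : regex d) (Ql Qr : Mat) : Prop :=
  Conv D A e /\ PSD D Ql /\ PSD D Qr /\ 0 < ZR D A e Ql Qr.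

Lemma is_nil_Ptilde D d (A : Fin.t d -> Mat) s Ql Qr :
  is_nil s * Ptilde D A s Ql Qr = is_nil s * mtrace D (mmul D Ql Qr).
Proof. destruct s; simpl; [rewrite Ptilde_nil|]; ring. Qed.

Lemma div_mul_div_cancel z zi x : 0 < z -> (zi = 0 -> x = 0) -> zi / z * (x / zi) = x / z.
Proof.
  intros Hz H; destruct (Req_dec zi 0) as [E|E].
  - rewrite E, H by auto; unfold Rdiv; ring.
  - field; split; lra.
Qed.

Section Target.

Variables (D d : nat) (A : Fin.t d -> Mat).

Lemma count_Ptilde_cat e1 e2 Ql Qr s :
  (forall s1, count e1 s1 * Ptilde D A s1 Ql (Er D A e2 Qr) = 0) ->
  (forall s1 s2, In (s1, s2) (splits s) -> count e1 s1 <> 0 -> ZR D A e2 (El_word D A s1 Ql) Qr = 0 ->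
     count e2 s2 * Ptilde D A s2 (El_word D A s1 Ql) Qr = 0) ->
  count (Cat e1 e2) s * Ptilde D A s Ql Qr = 0.
Proof.
  intros H1 H2; cbn [count]; rewrite <- lsum_scal_r; apply lsum_eq0.
  intros [s1 s2] Hp; cbn [fst snd].
  destruct (splits_spec s s1 s2 Hp) as [<- _].
  destruct (Req_dec (count e1 s1) 0) as [C|C]; [rewrite C; ring|].
  specialize (H1 s1); rewrite Ptilde_Er in H1.
  assert (Z2 : ZR D A e2 (El_word D A s1 Ql) Qr = 0) by nra.
  specialize (H2 s1 s2 Hp C Z2); rewrite Ptilde_app in H2.
  rewrite Rmult_assoc, H2; ring.
Qed.

Lemma count_Ptilde_eq0 e s Ql Qr :
  Conv D A e -> PSD D Ql -> PSD D Qr -> ZR D A e Ql Qr = 0 -> count e s * Ptilde D A s Ql Qr = 0.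
Proof.
  revert s Ql Qr; induction e as [c|e1 IH1 e2 IH2|e1 IH1 e2 IH2|e1 IH1];
    intros s Ql Qr HC HPl HPr HZ.
  - cbn [count]; unfold is_single; destruct s as [|c' [|]]; try ring.
    destruct (Fin.eq_dec c c') as [<-|]; [rewrite Ptilde_single, HZ|]; ring.
  - destruct HC as [H1 H2]; apply count_Ptilde_cat.
    + intros s1; apply IH1; auto; apply Er_PSD; auto.
    + intros s1 s2 _ _ Z2; apply IH2; auto; apply El_word_PSD; auto.
  - destruct HC as [H1 H2]; rewrite ZR_alt in HZ.
    pose proof (ZR_ge0 D d A e1 Ql Qr H1 HPl HPr); pose proof (ZR_ge0 D d A e2 Ql Qr H2 HPl HPr).
    cbn [count]; rewrite Rmult_plus_distr_r, IH1, IH2 by (auto; lra); ring.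
  - (* [count_star_unfold] needs [0 < D]; in dimension [0] every trace vanishes. *)
    destruct (Nat.eq_dec D 0) as [E|HD]; [unfold Ptilde, mtrace; rewrite E; simpl; ring|].
    pose proof (count_nil_star_body_eq0 D d A ltac:(lia) e1 HC) as Z0.
    revert Ql Qr HPl HPr HZ; induction s as [s IHs] using (induction_ltof1 _ (@length _)).
    intros Ql Qr HPl HPr HZ; rewrite ZR_star in HZ by auto.
    pose proof (PSD_mtrace_mmul_ge0 D Ql Qr HPl HPr).
    pose proof (ZR_ge0 D d A (Cat e1 (Star e1)) Ql Qr (conj (proj1 HC) HC) HPl HPr).
    rewrite (count_star_unfold D d A ltac:(lia)), Rmult_plus_distr_r, is_nil_Ptilde by auto.
    replace (mtrace D (mmul D Ql Qr)) with 0 by lra; rewrite Rmult_0_r, Rplus_0_l.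
    apply count_Ptilde_cat.
    + intros s1; apply IH1; auto; [apply HC | apply Er_PSD; auto|].
      change (ZR D A e1 Ql (Er D A (Star e1) Qr)) with (ZR D A (Cat e1 (Star e1)) Ql Qr); lra.
    + intros s1 s2 Hp C Z2; apply IHs; auto; [|apply El_word_PSD; auto].
      unfold ltof; destruct (splits_spec s s1 s2 Hp) as [_ [->|]]; [contradiction | auto].
Qed.

Lemma target_ge0 e Ql Qr s : admissible D A e Ql Qr -> 0 <= target D A e Ql Qr s.
Proof.
  intros (HC & HPl & HPr & HZ); unfold target, Rdiv.
  apply Rmult_le_pos; [apply Rmult_le_pos|].
  - apply (count_ge0 D d A (ZR_pos_dim D d A e Ql Qr HZ)); auto.
  - apply Ptilde_ge0; auto.
  - left; apply Rinv_0_lt_compat; auto.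
Qed.

Lemma target_single c Ql Qr s :
  0 < ZR D A (Chr c) Ql Qr -> target D A (Chr c) Ql Qr s = is_single c s.
Proof.
  intros HZ; unfold target; cbn [count]; unfold is_single.
  destruct s as [|c' [|]]; try (unfold Rdiv; ring).
  destruct (Fin.eq_dec c c') as [<-|]; [rewrite Ptilde_single; field; lra | unfold Rdiv; ring].
Qed.

(* [P~(s1 s2, Ql, Qr) = P~(s1, Ql, E^r_{e2} Qr) * P~(s2, E^l_{s1} Ql, Qr) / Z_{e2}(E^l_{s1} Ql, Qr)]:
   the middle normalization constant cancels. *)
Lemma target_cat e1 e2 Ql Qr s : admissible D A (Cat e1 e2) Ql Qr ->
  target D A (Cat e1 e2) Ql Qr s =
  lsum (fun p => target D A e1 Ql (Er D A e2 Qr) (fst p)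
                 * target D A e2 (El_word D A (fst p) Ql) Qr (snd p)) (splits s).
Proof.
  intros ([H1 H2] & HPl & HPr & HZ); unfold target at 1; cbn [count].
  unfold Rdiv; rewrite Rmult_assoc, <- lsum_scal_r; apply lsum_ext_in.
  intros [s1 s2] Hp; cbn [fst snd]; destruct (splits_spec s s1 s2 Hp) as [<- _].
  unfold target; rewrite Ptilde_Er, <- Ptilde_app.
  change (ZR D A (Cat e1 e2) Ql Qr) with (ZR D A e1 Ql (Er D A e2 Qr)) in HZ |- *.
  destruct (Req_dec (ZR D A e2 (El_word D A s1 Ql) Qr) 0) as [Z|Z].
  - pose proof (count_Ptilde_eq0 e2 s2 _ Qr H2 (El_word_PSD D d A s1 Ql HPl) HPr Z) as E2.
    set (P2 := Ptilde D A s2 (El_word D A s1 Ql) Qr) in *.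
    replace (count e1 s1 * count e2 s2 * (P2 * / ZR D A e1 Ql (Er D A e2 Qr)))
      with (count e1 s1 * (count e2 s2 * P2) * / ZR D A e1 Ql (Er D A e2 Qr)) by ring.
    rewrite E2, Z; unfold Rdiv; rewrite !Rmult_0_r, !Rmult_0_l; reflexivity.
  - field; split; lra.
Qed.

Lemma target_alt e1 e2 Ql Qr s : admissible D A (Alt e1 e2) Ql Qr ->
  target D A (Alt e1 e2) Ql Qr s =
    ZR D A e1 Ql Qr / ZR D A (Alt e1 e2) Ql Qr * target D A e1 Ql Qr s
  + ZR D A e2 Ql Qr / ZR D A (Alt e1 e2) Ql Qr * target D A e2 Ql Qr s.
Proof.
  intros ([H1 H2] & HPl & HPr & HZ); unfold target.
  rewrite !div_mul_div_cancel by (auto; intros; apply count_Ptilde_eq0; auto).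
  cbn [count]; unfold Rdiv; ring.
Qed.

Lemma target_star e1 Ql Qr s : admissible D A (Star e1) Ql Qr ->
  target D A (Star e1) Ql Qr s =
    is_nil s * (mtrace D (mmul D Ql Qr) / ZR D A (Star e1) Ql Qr)
  + ZR D A (Cat e1 (Star e1)) Ql Qr / ZR D A (Star e1) Ql Qr * target D A (Cat e1 (Star e1)) Ql Qr s.
Proof.
  intros (HC & HPl & HPr & HZ); unfold target at 2.
  rewrite div_mul_div_cancel
    by (auto; intros; apply count_Ptilde_eq0; auto; split; auto; apply (proj1 HC)).
  unfold target; rewrite (count_star_unfold D d A (ZR_pos_dim D d A _ _ _ HZ)) by auto.
  unfold Rdiv; rewrite !Rmult_plus_distr_r, is_nil_Ptilde; ring.
Qed.

Lemma target_cat_l_neq0 e1 e2 Ql Qr s1 :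
  target D A e1 Ql (Er D A e2 Qr) s1 <> 0 ->
  count e1 s1 <> 0 /\ ZR D A e2 (El_word D A s1 Ql) Qr <> 0.
Proof.
  unfold target; rewrite Ptilde_Er; intros H; split; intros E; apply H; rewrite E; unfold Rdiv; ring.
Qed.

Lemma admissible_cat_l e1 e2 Ql Qr :
  admissible D A (Cat e1 e2) Ql Qr -> admissible D A e1 Ql (Er D A e2 Qr).
Proof. intros ([H1 H2] & HPl & HPr & HZ); split; [|split; [|split]]; auto using Er_PSD. Qed.

Lemma admissible_cat_r e1 e2 Ql Qr s1 :
  admissible D A (Cat e1 e2) Ql Qr -> target D A e1 Ql (Er D A e2 Qr) s1 <> 0 ->
  admissible D A e2 (El_word D A s1 Ql) Qr.
Proof.
  intros ([H1 H2] & HPl & HPr & HZ) Ht; destruct (target_cat_l_neq0 _ _ _ _ _ Ht) as [_ Z].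
  pose proof (El_word_PSD D d A s1 Ql HPl).
  pose proof (ZR_ge0 D d A e2 (El_word D A s1 Ql) Qr H2 ltac:(auto) HPr).
  split; [|split; [|split]]; auto; lra.
Qed.

Lemma admissible_alt_l e1 e2 Ql Qr :
  admissible D A (Alt e1 e2) Ql Qr -> ZR D A e1 Ql Qr <> 0 -> admissible D A e1 Ql Qr.
Proof.
  intros ([H1 H2] & HPl & HPr & HZ) Z; pose proof (ZR_ge0 D d A e1 Ql Qr H1 HPl HPr).
  split; [|split; [|split]]; auto; lra.
Qed.

Lemma admissible_alt_r e1 e2 Ql Qr :
  admissible D A (Alt e1 e2) Ql Qr -> ZR D A e2 Ql Qr <> 0 -> admissible D A e2 Ql Qr.
Proof.
  intros ([H1 H2] & HPl & HPr & HZ) Z; pose proof (ZR_ge0 D d A e2 Ql Qr H2 HPl HPr).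
  split; [|split; [|split]]; auto; lra.
Qed.

Lemma admissible_star e1 Ql Qr :
  admissible D A (Star e1) Ql Qr -> ZR D A (Cat e1 (Star e1)) Ql Qr <> 0 ->
  admissible D A (Cat e1 (Star e1)) Ql Qr.
Proof.
  intros (HC & HPl & HPr & HZ) Z.
  pose proof (ZR_ge0 D d A (Cat e1 (Star e1)) Ql Qr (conj (proj1 HC) HC) HPl HPr).
  split; [split; [apply HC | auto]|split; [|split]]; auto; lra.
Qed.

End Target.

(** * Convergence of the sampler *)

Section Sampling.

Variables (D d : nat) (A : Fin.t d -> Mat).

Lemma psamp_star n e1 Ql Qr s : admissible D A (Star e1) Ql Qr ->
  psamp D A (S n) (Star e1) Ql Qr s =
    is_nil s * (mtrace D (mmul D Ql Qr) / ZR D A (Star e1) Ql Qr)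
  + ZR D A (Cat e1 (Star e1)) Ql Qr / ZR D A (Star e1) Ql Qr * psamp D A n (Cat e1 (Star e1)) Ql Qr s.
Proof.
  intros (HC & _ & _ & HZ).
  replace (ZR D A (Cat e1 (Star e1)) Ql Qr / ZR D A (Star e1) Ql Qr)
    with (1 - mtrace D (mmul D Ql Qr) / ZR D A (Star e1) Ql Qr)
    by (rewrite (ZR_star D d A e1 Ql Qr HC) in *; field; lra).
  destruct s; simpl; ring.
Qed.

Lemma psamp_bounds n e Ql Qr s : admissible D A e Ql Qr ->
  0 <= psamp D A n e Ql Qr s <= target D A e Ql Qr s.
Proof.
  revert e Ql Qr s; induction n as [|n IH]; intros e Ql Qr s Hadm;
    [simpl; split; [lra | apply target_ge0; auto]|].
  pose proof Hadm as (HC & HPl & HPr & HZ).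
  destruct e as [c|e1 e2|e1 e2|e1].
  - cbn [psamp]; rewrite target_single by auto; unfold is_single.
    destruct s as [|c' [|]]; try lra; destruct (Fin.eq_dec c c'); lra.
  - cbn [psamp]; rewrite target_cat by auto.
    apply lsum_bounds; intros [s1 s2] _; cbn [fst snd]; apply mul_bounds.
    + apply IH, admissible_cat_l; auto.
    + intros Ht; apply IH, (admissible_cat_r D d A e1 e2 Ql Qr s1); auto.
  - cbn [psamp]; rewrite target_alt by auto; destruct HC as [H1 H2].
    pose proof (weighted_bounds (ZR D A e1 Ql Qr) _ (psamp D A n e1 Ql Qr s) (target D A e1 Ql Qr s)
                  (ZR_ge0 D d A e1 Ql Qr H1 HPl HPr) HZ
                  (fun Z => IH _ _ _ _ (admissible_alt_l D d A e1 e2 Ql Qr Hadm Z))).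
    pose proof (weighted_bounds (ZR D A e2 Ql Qr) _ (psamp D A n e2 Ql Qr s) (target D A e2 Ql Qr s)
                  (ZR_ge0 D d A e2 Ql Qr H2 HPl HPr) HZ
                  (fun Z => IH _ _ _ _ (admissible_alt_r D d A e1 e2 Ql Qr Hadm Z))).
    lra.
  - rewrite psamp_star, target_star by auto.
    assert (0 <= is_nil s * (mtrace D (mmul D Ql Qr) / ZR D A (Star e1) Ql Qr)).
    { apply Rmult_le_pos; [destruct s; simpl; lra|].
      apply div_ge0; auto; apply PSD_mtrace_mmul_ge0; auto. }
    pose proof (weighted_bounds (ZR D A (Cat e1 (Star e1)) Ql Qr) _
                  (psamp D A n (Cat e1 (Star e1)) Ql Qr s) (target D A (Cat e1 (Star e1)) Ql Qr s)
                  (ZR_ge0 D d A (Cat e1 (Star e1)) Ql Qr (conj (proj1 HC) HC) HPl HPr) HZ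
                  (fun Z => IH _ _ _ _ (admissible_star D d A e1 Ql Qr Hadm Z))).
    lra.
Qed.

Lemma psamp_cv_cat e1 e2 Ql Qr s : admissible D A (Cat e1 e2) Ql Qr ->
  (forall s1, Un_cv (fun n => psamp D A n e1 Ql (Er D A e2 Qr) s1)
                    (target D A e1 Ql (Er D A e2 Qr) s1)) ->
  (forall s1 s2, In (s1, s2) (splits s) -> count e1 s1 <> 0 ->
     admissible D A e2 (El_word D A s1 Ql) Qr ->
     Un_cv (fun n => psamp D A n e2 (El_word D A s1 Ql) Qr s2)
           (target D A e2 (El_word D A s1 Ql) Qr s2)) ->
  Un_cv (fun n => psamp D A (S n) (Cat e1 e2) Ql Qr s) (target D A (Cat e1 e2) Ql Qr s).
Proof.
  intros Hadm H1 H2; rewrite target_cat by auto; cbn [psamp].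
  apply Un_cv_lsum; intros [s1 s2] Hp; cbn [fst snd].
  apply Un_cv_mul_bounded; [intros; apply psamp_bounds, admissible_cat_l; auto|].
  intros Ht; split; [apply H1|].
  apply H2; auto; [apply (target_cat_l_neq0 D d A e1 e2 Ql Qr s1 Ht)|].
  apply (admissible_cat_r D d A e1 e2 Ql Qr s1); auto.
Qed.

(* Since [|ε|_{e1} = 0], the first factor of every weighted unfolding of the star is a
   nonempty word, so the induction is on the length of [s]. *)
Lemma psamp_cv_star e1 Ql Qr s :
  (forall Ql Qr s, admissible D A e1 Ql Qr ->
     Un_cv (fun n => psamp D A n e1 Ql Qr s) (target D A e1 Ql Qr s)) ->
  admissible D A (Star e1) Ql Qr ->
  Un_cv (fun n => psamp D A n (Star e1) Ql Qr s) (target D A (Star e1) Ql Qr s).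
Proof.
  intros IH1 Hadm.
  pose proof (count_nil_star_body_eq0 D d A (ZR_pos_dim D d A _ _ _ (proj2 (proj2 (proj2 Hadm))))
                e1 (proj1 Hadm)) as Z0.
  revert Ql Qr Hadm; induction s as [s IHs] using (induction_ltof1 _ (@length _)).
  intros Ql Qr Hadm; pose proof Hadm as (HC & HPl & HPr & HZ).
  apply Un_cv_of_succ; rewrite target_star by auto.
  apply (Un_cv_ext (fun n => is_nil s * (mtrace D (mmul D Ql Qr) / ZR D A (Star e1) Ql Qr)
    + ZR D A (Cat e1 (Star e1)) Ql Qr / ZR D A (Star e1) Ql Qr * psamp D A n (Cat e1 (Star e1)) Ql Qr s));
    [intros; rewrite psamp_star; auto|].
  apply CV_plus, Un_cv_weighted; [apply Un_cv_const|]; intros Zc.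
  assert (Hadm' : admissible D A (Cat e1 (Star e1)) Ql Qr) by (apply admissible_star; auto).
  apply Un_cv_of_succ, psamp_cv_cat; auto.
  - intros s1; apply IH1, admissible_cat_l; auto.
  - intros s1 s2 Hp C Hadm2; apply IHs; auto.
    unfold ltof; destruct (splits_spec s s1 s2 Hp) as [_ [->|]]; [contradiction | auto].
Qed.

Lemma psamp_cv e Ql Qr s : admissible D A e Ql Qr ->
  Un_cv (fun n => psamp D A n e Ql Qr s) (target D A e Ql Qr s).
Proof.
  revert Ql Qr s; induction e as [c|e1 IH1 e2 IH2|e1 IH1 e2 IH2|e1 IH1]; intros Ql Qr s Hadm.
  - apply Un_cv_of_succ, Un_cv_eventually_const; exists 0%nat; intros; cbn [psamp].
    rewrite target_single; auto; apply Hadm.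
  - apply Un_cv_of_succ, psamp_cv_cat; auto.
    intros s1; apply IH1, admissible_cat_l; auto.
  - apply Un_cv_of_succ; rewrite target_alt by auto; cbn [psamp].
    apply CV_plus; apply Un_cv_weighted; intros Z.
    + apply IH1, (admissible_alt_l D d A e1 e2); auto.
    + apply IH2, (admissible_alt_r D d A e1 e2); auto.
  - apply psamp_cv_star; auto.
Qed.

End Sampling.

Theorem lemma1 (D d : nat) (A : Fin.t d -> Mat) (e : regex d) (Ql Qr : Mat) :
  Conv D A e ->
  PSD D Ql -> PSD D Qr ->
  0 < ZR D A e Ql Qr ->
  (forall c : call d, clos_refl_trans (call d) (step D A) (e, Ql, Qr) c ->
     norm_pos D A c) ->
  forall s : word d,
    Un_cv (fun n => psamp D A n e Ql Qr s)
          (count e s * Ptilde D A s Ql Qr / ZR D A e Ql Qr).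
Proof.
  intros HC HPl HPr HZ _ s.
  apply (psamp_cv D d A e Ql Qr s); split; [|split; [|split]]; auto.
Qed.
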